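(* Let $M>0$, $0<a<M$, $\mu>0$, $m\in\mathbb{Z}\setminus\{0\}$, $n\in\{0,1,2,\dots\}$, $l\in\{|m|,|m|+1,\dots\}$, and define $$\alpha_1=\frac{ma}{\mu M^2},\quad \alpha_2=\frac{2n+1}{\mu M}\sqrt{1-\frac{a^2}{M^2}},\quad \alpha=\alpha_1-i\alpha_2,\quad \epsilon=2\sqrt{1-\frac{a^2}{M^2}},\quad \beta=6-\frac{l(l+1)}{\mu^2M^2}.$$ Assume $\beta\geq 0$ and define $$q(z)=z^4+\frac{4z}{\beta+\epsilon}\left[(2+\epsilon)(z^2+1)+\alpha(z^2-1)\right]+2\,\frac{16-\beta+3\epsilon}{\beta+\epsilon}\,z^2+1,\quad z\in\mathbb{C},$$ and $h_1,h_2:\mathbb{R}\to\mathbb{R}$ by $h_1(y)=\mathrm{Re}(q(iy))$, $h_2(y)=\mathrm{Im}(q(iy))$. If $\alpha_1>2+\epsilon$ or $\alpha_1<-(2+\epsilon)$, then $q$ has no purely imaginary roots (roots of the form $iy$, $y\in\mathbb{R}$). Moreover: (i) if $\alpha_1>2+\epsilon$, then $h_2$ is strictly decreasing and $h_2((0,\infty))\subset(-\infty,0)$; (ii) if $\alpha_1<-(2+\epsilon)$, then $h_2$ is strictly increasing and $h_2((0,\infty))\subset(0,\infty)$; (iii) if $0<\beta<8+\epsilon$, then $h_1$ has precisely $2$ positive roots $\bar y_0,\bar y_1$ with $0<\bar y_0<\bar y_1$, and $h_1(y)>0$ for $0\leq y<\bar y_0$, $h_1(y)<0$ for $\bar y_0<y<\bar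 y_1$, and $h_1(y)>0$ for $y>\bar y_1$. *)

From Stdlib Require Import Reals ZArith.
From Coquelicot Require Import Coquelicot.

Open Scope R_scope.

Definition alpha1 (M a mu : R) (m : Z) : R := IZR m * a / (mu * M ^ 2).
Definition alpha2 (M a mu : R) (n : nat) : R :=
  (2 * INR n + 1) / (mu * M) * sqrt (1 - a ^ 2 / M ^ 2).
Definition alphaC (M a mu : R) (m : Z) (n : nat) : C :=
  (RtoC (alpha1 M a mu m) - Ci * RtoC (alpha2 M a mu n))%C.
Definition eps (M a : R) : R := 2 * sqrt (1 - a ^ 2 / M ^ 2).
Definition betaP (M mu : R) (l : nat) : R :=
  6 - INR l * (INR l + 1) / (mu ^ 2 * M ^ 2).

Definition qpoly (M a mu : R) (m : Z) (n l : nat) (z : C) : C :=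
  let e := eps M a in
  let b := betaP M mu l in
  let al := alphaC M a mu m n in
  (z ^ 4
   + RtoC 4 * z / RtoC (b + e)
       * (RtoC (2 + e) * (z ^ 2 + 1) + al * (z ^ 2 - 1))
   + RtoC 2 * RtoC ((16 - b + 3 * e) / (b + e)) * z ^ 2 + 1)%C.

Definition h1 (M a mu : R) (m : Z) (n l : nat) (y : R) : R :=
  Re (qpoly M a mu m n l (Ci * RtoC y)%C).
Definition h2 (M a mu : R) (m : Z) (n l : nat) (y : R) : R :=
  Im (qpoly M a mu m n l (Ci * RtoC y)%C).

From Stdlib Require Import Reals ZArith Lra.
From Coquelicot Require Import Coquelicot.
Open Scope R_scope.

(* On the imaginary axis, [Im q(iy)] is an odd cubic whose two coefficients
   have opposite signs as soon as [|alpha1| > 2 + eps], so it is strictly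
   monotone and vanishes only at [0], where [Re q(0) = 1].  [Re q(iy)] is the
   palindromic quartic [y^4 - p y^3 - r y^2 - p y + 1], which splits as
   [(y^2 - t y + 1)(y^2 - t' y + 1)] with [t + t' = p] and [t t' = -(2 + r)].
   When [0 < beta < 8 + eps] one gets [t > 2 > 0 > t']: the first factor has
   two positive roots (with product 1) and the second is positive on [y >= 0]. *)

Lemma eps_pos (M a : R) : 0 <= a -> a < M -> 0 < eps M a.
Proof.
  intros ha haM; unfold eps.
  assert (hlt : a ^ 2 / M ^ 2 < 1).
  { apply (Rmult_lt_reg_r (M ^ 2)); [nra|]. field_simplify; nra. }
  apply Rmult_lt_0_compat; [lra|]. apply sqrt_lt_R0; lra.
Qed.

Lemma eps_nonneg (M a : R) : 0 <= eps M a.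
Proof. unfold eps; pose proof (sqrt_pos (1 - a ^ 2 / M ^ 2)); lra. Qed.

Lemma alpha2_nonneg (M a mu : R) (n : nat) : 0 < M -> 0 < mu -> 0 <= alpha2 M a mu n.
Proof.
  intros hM hmu; unfold alpha2.
  apply Rmult_le_pos; [|apply sqrt_pos].
  apply Rdiv_le_0_compat; [pose proof (pos_INR n); lra | nra].
Qed.

Lemma odd_cubic_decreasing (c1 c3 x y : R) :
  c1 < 0 -> 0 < c3 -> x < y -> c1 * y - c3 * y ^ 3 < c1 * x - c3 * x ^ 3.
Proof.
  intros h1 h3 hxy.
  assert (hdiff : c3 * y ^ 3 - c3 * x ^ 3 = c3 * (y - x) * (x * x + x * y + y * y)) by ring.
  assert (hsq : 0 <= x * x + x * y + y * y) by nra.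
  assert (0 <= c3 * (y - x) * (x * x + x * y + y * y)).
  { apply Rmult_le_pos; [apply Rmult_le_pos|]; lra. }
  nra.
Qed.

Lemma strict_monotone_zero (f : R -> R) (y : R) :
  ((forall u v, u < v -> f u < f v) \/ (forall u v, u < v -> f v < f u)) ->
  f 0 = 0 -> f y = 0 -> y = 0.
Proof.
  intros hmono h0 hy.
  destruct (Rtotal_order y 0) as [hlt | [heq | hgt]]; [| exact heq |];
    destruct hmono as [hf | hf];
    [ pose proof (hf _ _ hlt) | pose proof (hf _ _ hlt)
    | pose proof (hf _ _ hgt) | pose proof (hf _ _ hgt) ]; lra.
Qed.

Lemma quadratic_factor (s c y : R) : 0 <= s ^ 2 - 4 * c ->
  y ^ 2 - s * y + c
  = (y - (s - sqrt (s ^ 2 - 4 * c)) / 2) * (y - (s + sqrt (s ^ 2 - 4 * c)) / 2).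
Proof.
  intro hD.
  pose proof (sqrt_sqrt _ hD) as hsq.
  set (d := sqrt (s ^ 2 - 4 * c)) in *.
  replace c with ((s ^ 2 - d * d) / 4) at 1 by lra.
  field.
Qed.

Lemma reciprocal_quadratic_roots (t : R) : 2 < t ->
  exists y0 y1, 0 < y0 < y1 /\ forall y, y ^ 2 - t * y + 1 = (y - y0) * (y - y1).
Proof.
  intro ht.
  assert (hD : 0 < t ^ 2 - 4 * 1) by nra.
  pose proof (sqrt_sqrt _ (Rlt_le _ _ hD)) as hsq.
  pose proof (sqrt_lt_R0 _ hD) as hd0.
  exists ((t - sqrt (t ^ 2 - 4 * 1)) / 2), ((t + sqrt (t ^ 2 - 4 * 1)) / 2).
  split; [| intro y; apply quadratic_factor; lra].
  assert (sqrt (t ^ 2 - 4 * 1) < t).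
  { apply Rsqr_incrst_0; unfold Rsqr; lra. }
  lra.
Qed.

Lemma palindromic_quartic_split (p r : R) :
  0 <= p -> 0 < 2 + r -> 2 < r + 2 * p ->
  exists t t', 2 < t /\ t' < 0 /\ forall y,
    y ^ 4 - p * y ^ 3 - r * y ^ 2 - p * y + 1
    = (y ^ 2 - t * y + 1) * (y ^ 2 - t' * y + 1).
Proof.
  intros hp hr hrp.
  assert (hD : 0 < p ^ 2 + 4 * (2 + r)) by nra.
  pose proof (sqrt_sqrt _ (Rlt_le _ _ hD)) as hsq.
  pose proof (sqrt_lt_R0 _ hD) as hd0.
  set (d := sqrt (p ^ 2 + 4 * (2 + r))) in *.
  exists ((p + d) / 2), ((p - d) / 2).
  assert (hdp : p < d) by (apply Rsqr_incrst_0; unfold Rsqr; lra).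
  split; [| split; [lra |]].
  - (* [d > 4 - p] is exactly [r + 2 p > 2] after squaring *)
    destruct (Rle_lt_dec (4 - p) 0); [lra |].
    assert (4 - p < d) by (apply Rsqr_incrst_0; unfold Rsqr; lra).
    lra.
  - intro y.
    replace r with ((d * d - p ^ 2) / 4 - 2) at 1 by lra.
    field.
Qed.

Definition positive_root_pair (f : R -> R) (y0 y1 : R) : Prop :=
  0 < y0 < y1
  /\ f y0 = 0 /\ f y1 = 0
  /\ (forall y : R, 0 < y -> f y = 0 -> y = y0 \/ y = y1)
  /\ (forall y : R, 0 <= y < y0 -> 0 < f y)
  /\ (forall y : R, y0 < y < y1 -> f y < 0)
  /\ (forall y : R, y1 < y -> 0 < f y).

Lemma positive_root_pair_factor (f g : R -> R) (y0 y1 : R) :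
  0 < y0 < y1 -> (forall y, 0 <= y -> 0 < g y) ->
  (forall y, f y = (y - y0) * (y - y1) * g y) ->
  positive_root_pair f y0 y1.
Proof.
  intros hy hg hf.
  split; [exact hy |].
  split; [rewrite hf; ring |].
  split; [rewrite hf; ring |].
  split; [| split; [| split]]; intros y hy'; rewrite hf;
    pose proof (hg y ltac:(lra)) as hgy.
  - intro h0; apply Rmult_integral in h0 as [h0 | h0]; [| lra].
    apply Rmult_integral in h0 as [h0 | h0]; [left | right]; lra.
  - apply Rmult_lt_0_compat; [nra | exact hgy].
  - assert ((y - y0) * (y - y1) < 0) by nra. nra.
  - apply Rmult_lt_0_compat; [nra | exact hgy].
Qed.

Lemma palindromic_quartic_root_pair (p r : R) (f : R -> R) :
  0 <= p -> 0 < 2 + r -> 2 < r + 2 * p ->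
  (forall y, f y = y ^ 4 - p * y ^ 3 - r * y ^ 2 - p * y + 1) ->
  exists y0 y1, positive_root_pair f y0 y1.
Proof.
  intros hp hr hrp hf.
  destruct (palindromic_quartic_split p r hp hr hrp) as (t & t' & ht & ht' & hsplit).
  destruct (reciprocal_quadratic_roots t ht) as (y0 & y1 & hy & hquad).
  exists y0, y1.
  apply (positive_root_pair_factor f (fun y => y ^ 2 - t' * y + 1)); [exact hy | |].
  - intros y hy'; nra.
  - intro y; rewrite hf, hsplit, hquad; reflexivity.
Qed.

Section ImaginaryAxis.

Variables (M a mu : R) (m : Z) (n l : nat).

Local Notation e := (eps M a).
Local Notation b := (betaP M mu l).
Local Notation A1 := (alpha1 M a mu m).
Local Notation A2 := (alpha2 M a mu n).

Hypothesis hbe : 0 < b + e.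

Lemma h1_imag_axis (y : R) :
  h1 M a mu m n l y =
    y ^ 4 - 4 * A2 / (b + e) * y ^ 3 - 2 * (16 - b + 3 * e) / (b + e) * y ^ 2
    - 4 * A2 / (b + e) * y + 1.
Proof.
  unfold h1, qpoly, alphaC; simpl.
  unfold Cminus, Cdiv, Cinv, Cplus, Cmult, Copp, RtoC, Ci; simpl.
  field; lra.
Qed.

Lemma h2_imag_axis (y : R) :
  h2 M a mu m n l y = 4 / (b + e) * ((2 + e - A1) * y - (2 + e + A1) * y ^ 3).
Proof.
  unfold h2, qpoly, alphaC; simpl.
  unfold Cminus, Cdiv, Cinv, Cplus, Cmult, Copp, RtoC, Ci; simpl.
  field; lra.
Qed.

Lemma h1_at_0 : h1 M a mu m n l 0 = 1.
Proof. rewrite h1_imag_axis; ring. Qed.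

Lemma h2_at_0 : h2 M a mu m n l 0 = 0.
Proof. rewrite h2_imag_axis; ring. Qed.

Lemma h2_decreasing : A1 > 2 + e ->
  forall x y, x < y -> h2 M a mu m n l y < h2 M a mu m n l x.
Proof.
  intros hA x y hxy; rewrite !h2_imag_axis.
  pose proof (eps_nonneg M a).
  apply Rmult_lt_compat_l; [apply Rdiv_lt_0_compat; lra |].
  apply odd_cubic_decreasing; lra.
Qed.

Lemma h2_increasing : A1 < - (2 + e) ->
  forall x y, x < y -> h2 M a mu m n l x < h2 M a mu m n l y.
Proof.
  intros hA x y hxy; rewrite !h2_imag_axis.
  pose proof (eps_nonneg M a).
  apply Rmult_lt_compat_l; [apply Rdiv_lt_0_compat; lra |].
  pose proof (odd_cubic_decreasing (- (2 + e - A1)) (- (2 + e + A1)) x y); lra.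
Qed.

Lemma qpoly_imag_axis_nonzero : A1 > 2 + e \/ A1 < - (2 + e) ->
  forall y, qpoly M a mu m n l (Ci * RtoC y)%C <> 0%C.
Proof.
  intros hA y hq.
  assert (hy0 : y = 0).
  { apply (strict_monotone_zero (h2 M a mu m n l)); [| exact h2_at_0 |].
    - destruct hA; [right; apply h2_decreasing | left; apply h2_increasing]; lra.
    - unfold h2; rewrite hq; reflexivity. }
  assert (h1y : h1 M a mu m n l y = 0) by (unfold h1; rewrite hq; reflexivity).
  rewrite hy0, h1_at_0 in h1y; lra.
Qed.

Lemma h1_positive_root_pair : 0 <= A2 -> b < 8 + e ->
  exists y0 y1, positive_root_pair (h1 M a mu m n l) y0 y1.
Proof.
  intros hA2 hb8; pose proof (eps_nonneg M a).
  apply (palindromic_quartic_root_pair (4 * A2 / (b + e))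
           (2 * (16 - b + 3 * e) / (b + e))); [| | | exact h1_imag_axis].
  - apply Rdiv_le_0_compat; lra.
  - assert (0 < 2 * (16 - b + 3 * e) / (b + e)) by (apply Rdiv_lt_0_compat; lra).
    lra.
  - assert (0 < (32 - 4 * b + 4 * e + 8 * A2) / (b + e)) by (apply Rdiv_lt_0_compat; lra).
    replace (2 * (16 - b + 3 * e) / (b + e) + 2 * (4 * A2 / (b + e)))
      with (2 + (32 - 4 * b + 4 * e + 8 * A2) / (b + e)) by (field; lra).
    lra.
Qed.

End ImaginaryAxis.

Theorem mainTheorem9 (M a mu : R) (m : Z) (n l : nat)
  (hM : 0 < M) (ha0 : 0 < a) (haM : a < M) (hmu : 0 < mu)
  (hm : m <> 0%Z) (hl : (Z.abs_nat m <= l)%nat)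
  (hbeta : 0 <= betaP M mu l) :
  let e := eps M a in
  let b := betaP M mu l in
  let A1 := alpha1 M a mu m in
  ((A1 > 2 + e \/ A1 < - (2 + e)) ->
     forall y : R, qpoly M a mu m n l (Ci * RtoC y)%C <> 0%C)
  /\ (A1 > 2 + e ->
       (forall x y : R, x < y -> h2 M a mu m n l y < h2 M a mu m n l x)
       /\ (forall y : R, 0 < y -> h2 M a mu m n l y < 0))
  /\ (A1 < - (2 + e) ->
       (forall x y : R, x < y -> h2 M a mu m n l x < h2 M a mu m n l y)
       /\ (forall y : R, 0 < y -> 0 < h2 M a mu m n l y))
  /\ (0 < b < 8 + e ->
       exists y0 y1 : R,
         0 < y0 < y1
         /\ h1 M a mu m n l y0 = 0 /\ h1 M a mu m n l y1 = 0
         /\ (forall y : R, 0 < y -> h1 M a mu m n l y = 0 -> y = y0 \/ y = y1)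
         /\ (forall y : R, 0 <= y < y0 -> 0 < h1 M a mu m n l y)
         /\ (forall y : R, y0 < y < y1 -> h1 M a mu m n l y < 0)
         /\ (forall y : R, y1 < y -> 0 < h1 M a mu m n l y)).
Proof.
  intros e b A1.
  assert (he : 0 < e) by exact (eps_pos M a (Rlt_le _ _ ha0) haM).
  assert (hbe : 0 < b + e) by (change (0 <= b) in hbeta; lra).
  split; [| split; [| split]].
  - exact (qpoly_imag_axis_nonzero M a mu m n l hbe).
  - intro hA; split; [exact (h2_decreasing M a mu m n l hbe hA) |].
    intros y hy; rewrite <- (h2_at_0 M a mu m n l hbe).
    exact (h2_decreasing M a mu m n l hbe hA 0 y hy).
  - intro hA; split; [exact (h2_increasing M a mu m n l hbe hA) |].
    intros y hy; rewrite <- (h2_at_0 M a mu m n l hbe).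
    exact (h2_increasing M a mu m n l hbe hA 0 y hy).
  - intros [_ hb8].
    exact (h1_positive_root_pair M a mu m n l hbe (alpha2_nonneg M a mu n hM hmu) hb8).
Qed.
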